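(* Let $\Omega_1=\{(u,v)\in\mathbb{C}^2: |u^2|+|v^2|-1<|u^2+v^2-1|\}$. Then $\{1-u^2-v^2:(u,v)\in\Omega_1\}\subset\mathbb{C}-(-\infty,0]$. *)

From HB Require Import structures.
From mathcomp Require Import all_boot all_order all_algebra.
From mathcomp Require Export complex.
Set Implicit Arguments. Unset Strict Implicit. Unset Printing Implicit Defensive.
Import Order.TTheory GRing.Theory Num.Theory.
Local Open Scope ring_scope.

Definition Omega1 (R : rcfType) (u v : R[i]) : Prop :=
  `|u ^+ 2| + `|v ^+ 2| - 1 < `|u ^+ 2 + v ^+ 2 - 1|.

Definition slit_plane (R : rcfType) (z : R[i]) : Prop :=
  ~ (complex.Im z = 0 /\ complex.Re z <= 0).

From HB Require Import structures.
From mathcomp Require Import all_boot all_order all_algebra.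
From mathcomp Require Import complex.
Set Implicit Arguments.
Unset Strict Implicit.
Unset Printing Implicit Defensive.

Import Order.TTheory GRing.Theory Num.Theory.
Local Open Scope ring_scope.

(* If [z = 1 - u^2 - v^2] were a nonpositive real (in the partial order of
   [R[i]] this is just [z <= 0]), then [w = u^2 + v^2 - 1 = -z]
   would be a nonnegative real, so [|w| = w = |u^2 + v^2| - 1 <= |u^2| + |v^2| - 1]
   by the triangle inequality, contradicting the defining inequality of Omega_1. *)

Lemma ge0_normDB1 (R : numDomainType) (a b : R) :
  0 <= a + b - 1 -> `|a + b - 1| <= `|a| + `|b| - 1.
Proof.
move=> ge0_ab1; rewrite ger0_norm // lerD2r.
have ge0_ab : 0 <= a + b by rewrite -(subrK 1 (a + b)) addr_ge0.
exact: le_trans (real_ler_norm (ger0_real ge0_ab)) (ler_normD a b).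
Qed.

Lemma slit_planeP (R : rcfType) (z : R[i]) : slit_plane z <-> ~ (z <= 0).
Proof.
rewrite /slit_plane lecE eq_sym.
split=> nz hz; apply: nz.
- by case/andP: hz => /eqP im_z re_z; split; [exact: im_z | exact: re_z].
- by case: hz => im_z re_z; apply/andP; split; [apply/eqP; exact: im_z | exact: re_z].
Qed.

Theorem lemma4p5 (R : rcfType) (u v : R[i]) :
  Omega1 u v -> slit_plane (1 - u ^+ 2 - v ^+ 2).
Proof.
rewrite /Omega1 => in_Omega1; apply/slit_planeP => z_le0.
have ge0_w : 0 <= u ^+ 2 + v ^+ 2 - 1.
  by rewrite -oppr_le0 opprB opprD addrA.
by have := lt_le_trans in_Omega1 (ge0_normDB1 ge0_w); rewrite ltxx.
Qed.
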